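(* Let $K=\{K_X\}_{X\subset\Lambda_L}$ be an even interaction on $\Lambda_L$ and $K_{\Lambda_L}=\sum_{X\subset\Lambda_L}K_X$. Then, for every $\kappa\ge0$, \[ \bigl\|[K_{\Lambda_L},\bar q_{\Lambda_L}]\bigr\|\le2\|K\|_0\le2\|K\|_\kappa . \]
   Context: $\Lambda_L=(\mathbb Z/L\mathbb Z)^d$, $L\in2\mathbb N$; fermionic Fock space over $\ell^2(\Lambda_L)\otimes\mathbb C^2$ with CAR operators $c_{x\sigma}$, $n_{x\sigma}=c^*_{x\sigma}c_{x\sigma}$, $n_x=n_{x\uparrow}+n_{x\downarrow}$, $q_x=(n_x-1)^2$, $\bar q_{\Lambda_L}=|\Lambda_L|^{-1}\sum_{x\in\Lambda_L}q_x$. An even interaction is $K=\{K_X\}$ with $K_X$ a parity-even (invariant under $c_{x\sigma}\mapsto-c_{x\sigma}$) element of the CAR algebra generated by $c_{x\sigma},c^*_{x\sigma}$, $x\in X$. $\|K\|_\kappa=\sup_x\sum_{X\ni x}e^{\kappa|X|}\|K_X\|$ (operator norm), $\|K\|_0$ the case $\kappa=0$. *)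

From HB Require Import structures.
From mathcomp Require Import all_boot all_order all_algebra.
From mathcomp Require Import all_classical all_reals.
From mathcomp Require Import all_analysis.
From mathcomp.real_closed Require Import complex.
Set Implicit Arguments. Unset Strict Implicit. Unset Printing Implicit Defensive.
Import Order.TTheory GRing.Theory Num.Theory.
Import ComplexField.
Local Open Scope ring_scope.

Section Fock.
Variable R : realType.
Local Notation C := R[i].

Definition cabs (z : C) : R := Normc.normc z.

(* lattice Lambda_L = (Z/LZ)^d, as a finite set of sites *)
Definition site (d L : nat) := {ffun 'I_d -> 'I_L}.
(* single-particle modes: site x spin (true = up, false = down) *)
Definition mode (d L : nat) := (site d L * bool)%type.

Variables d L : nat.
Local Notation M := (mode d L).

(* Fock basis: occupation sets S ⊆ modes; vectors and operators *)
Definition vec := {set M} -> C.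
Definition op := {set M} -> {set M} -> C.   (* matrix kernel A S T = <S|A|T> *)

Definition op_apply (A : op) (v : vec) : vec := fun S => \sum_T A S T * v T.
Definition op_mul (A B : op) : op := fun S T => \sum_U A S U * B U T.
Definition op_add (A B : op) : op := fun S T => A S T + B S T.
Definition op_scale (a : C) (A : op) : op := fun S T => a * A S T.
Definition op_zero : op := fun _ _ => 0.
Definition op_one : op := fun S T => (S == T)%:R.
Definition op_adj (A : op) : op := fun S T => (A T S)^*.
Definition op_sum (I : finType) (P : pred I) (F : I -> op) : op :=
  fun S T => \sum_(i | P i) F i S T.
Definition comm (A B : op) : op := op_add (op_mul A B) (op_scale (-1) (op_mul B A)).

Definition vnorm (v : vec) : R := Num.sqrt (\sum_S cabs (v S) ^+ 2).
Definition opnorm (A : op) : R :=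
  sup [set r : R | exists v : vec, vnorm v <= 1 /\ r = vnorm (op_apply A v)].

(* Jordan-Wigner realisation of the CAR: annihilation operator c_m *)
Definition jw_sign (m : M) (S : {set M}) : C :=
  (-1) ^+ #|[set m' in S | (enum_rank m' < enum_rank m)%N]|.
Definition cop (m : M) : op :=
  fun S T => ((m \in T) && (S == T :\ m))%:R * jw_sign m T.
Definition cdag (m : M) : op := op_adj (cop m).

Definition nop (x : site d L) (s : bool) : op := op_mul (cdag (x, s)) (cop (x, s)).
Definition nx (x : site d L) : op := op_add (nop x true) (nop x false).
Definition qx (x : site d L) : op :=
  let A := op_add (nx x) (op_scale (-1) op_one) in op_mul A A.
Definition qbar : op :=
  op_scale (#|site d L|%:R)^-1 (op_sum predT qx).

Inductive in_alg (X : {set site d L}) : op -> Prop :=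
| alg_c x s : x \in X -> in_alg X (cop (x, s))
| alg_cdag x s : x \in X -> in_alg X (cdag (x, s))
| alg_one : in_alg X op_one
| alg_add A B : in_alg X A -> in_alg X B -> in_alg X (op_add A B)
| alg_scale a A : in_alg X A -> in_alg X (op_scale a A)
| alg_mul A B : in_alg X A -> in_alg X B -> in_alg X (op_mul A B).

(* parity automorphism theta (c_m |-> -c_m), implemented as Ad(P) with
   P = (-1)^{total number operator} *)
Definition parity : op := fun S T => (S == T)%:R * (-1) ^+ #|S|.
Definition theta (A : op) : op := op_mul parity (op_mul A parity).
Definition even_op (A : op) : Prop := theta A = A.

Definition interaction := {set site d L} -> op.
Definition even_interaction (K : interaction) : Prop :=
  forall X, in_alg X (K X) /\ even_op (K X).

Definition K_total (K : interaction) : op := op_sum predT K.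

Definition int_norm (kappa : R) (K : interaction) : R :=
  \big[Num.max/0]_(x : site d L)
     \sum_(X : {set site d L} | x \in X) expR (kappa * #|X|%:R) * opnorm (K X).

End Fock.

From Pilot Require Import Defs.
From mathcomp Require Import all_boot all_order all_algebra.
From mathcomp Require Import all_classical all_reals.
From mathcomp.real_closed Require Import complex.
From mathcomp Require Import all_analysis.
From mathcomp Require Import ring lra.
Import Order.TTheory GRing.Theory Num.Theory.
Local Open Scope ring_scope.

(* In the occupation-number basis q_x is diagonal with eigenvalues (n_x - 1)^2
   in {0, 1}, so qbar is diagonal too.  An element of the local algebra of X
   changes occupations only at sites of X, hence commutes with q_x for x not
   in X, and [K, qbar] = |Lambda|^-1 sum_X sum_(x in X) [K_X, q_x].  Since
   ||q_x|| <= 1, each commutator has norm at most 2 ||K_X||; exchanging the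
   sums gives |Lambda|^-1 sum_x sum_(X ni x) 2 ||K_X|| <= 2 ||K||_0. *)

Section SumsOfSquares.
Context {R : rcfType} {I : finType}.
Implicit Types a b : I -> R.

Lemma sum_sqr_ge0 a : 0 <= \sum_i a i ^+ 2.
Proof. by apply: sumr_ge0 => i _; apply: sqr_ge0. Qed.

Lemma lagrange_identity a b :
  \sum_i \sum_j (a i * b j - a j * b i) ^+ 2
  = 2 * ((\sum_i a i ^+ 2) * (\sum_i b i ^+ 2) - (\sum_i a i * b i) ^+ 2).
Proof.
transitivity (\sum_i \sum_j a i ^+ 2 * b j ^+ 2 + \sum_i \sum_j a j ^+ 2 * b i ^+ 2
              - 2 * \sum_i \sum_j (a i * b i) * (a j * b j)).
  rewrite -big_split mulr_sumr -sumrB; apply: eq_bigr => i _.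
  rewrite -big_split mulr_sumr -sumrB; apply: eq_bigr => j _ /=; ring.
rewrite [X in _ + X - _]exchange_big /= expr2 !big_distrlr /=; ring.
Qed.

Lemma cauchy_schwarz a b :
  \sum_i a i * b i <= Num.sqrt (\sum_i a i ^+ 2) * Num.sqrt (\sum_i b i ^+ 2).
Proof.
have sqr_le : (\sum_i a i * b i) ^+ 2 <= (\sum_i a i ^+ 2) * (\sum_i b i ^+ 2).
  rewrite -subr_ge0 -(@pmulr_rge0 _ 2) // -lagrange_identity.
  by apply: sumr_ge0 => i _; apply: sum_sqr_ge0.
rewrite -sqrtrM ?sum_sqr_ge0 //; apply: le_trans (ler_norm _) _.
by rewrite -sqrtr_sqr ler_wsqrtr.
Qed.

Lemma minkowski a b :
  Num.sqrt (\sum_i (a i + b i) ^+ 2)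
  <= Num.sqrt (\sum_i a i ^+ 2) + Num.sqrt (\sum_i b i ^+ 2).
Proof.
set A := Num.sqrt (\sum_i a i ^+ 2); set B := Num.sqrt (\sum_i b i ^+ 2).
have AB0 : 0 <= A + B by rewrite addr_ge0 ?sqrtr_ge0.
rewrite -(ger0_norm AB0) -sqrtr_sqr ler_wsqrtr //.
have -> : \sum_i (a i + b i) ^+ 2
    = \sum_i a i ^+ 2 + \sum_i b i ^+ 2 + 2 * \sum_i a i * b i.
  by rewrite mulr_sumr -!big_split /=; apply: eq_bigr => i _; ring.
have := cauchy_schwarz a b; rewrite -/A -/B.
rewrite sqrrD -[\sum_i a i ^+ 2](sqr_sqrtr (sum_sqr_ge0 a)) -/A.
rewrite -[\sum_i b i ^+ 2](sqr_sqrtr (sum_sqr_ge0 b)) -/B; lra.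
Qed.
End SumsOfSquares.

Section FockVectors.
Context {R : realType} {d L : nat}.
Local Notation vec := (vec R d L).
Local Notation vnorm := (@vnorm R d L).
Local Notation cabs := (@cabs R).
Implicit Types u v w : vec.

Lemma cabs_ge0 z : 0 <= cabs z.
Proof. by case: z => a b; apply: sqrtr_ge0. Qed.

Lemma cabsD x y : cabs (x + y) <= cabs x + cabs y.
Proof. exact: le_normcD. Qed.

Lemma cabsM x y : cabs (x * y) = cabs x * cabs y.
Proof. exact: Normc.normcM. Qed.

Lemma cabs_natV n : cabs (n%:R)^-1 = (n%:R)^-1.
Proof.
rewrite /cabs Normc.normcV -(rmorph_nat (real_complex R)) /=.
by rewrite expr0n /= addr0 sqrtr_sqr ger0_norm.
Qed.

Lemma vnorm_ge0 v : 0 <= vnorm v.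
Proof. exact: sqrtr_ge0. Qed.

Lemma vnorm_le u v : (forall S, cabs (u S) <= cabs (v S)) -> vnorm u <= vnorm v.
Proof.
move=> le_uv; apply: ler_wsqrtr; apply: ler_sum => S _.
by rewrite ler_sqr ?nnegrE ?cabs_ge0.
Qed.

Lemma vnorm_le_add u v w : (forall S, cabs (u S) <= cabs (v S) + cabs (w S)) ->
  vnorm u <= vnorm v + vnorm w.
Proof.
move=> le_u; apply: le_trans (minkowski (cabs \o v) (cabs \o w)).
apply: ler_wsqrtr; apply: ler_sum => S _.
by rewrite ler_sqr ?nnegrE ?addr_ge0 ?cabs_ge0.
Qed.

Lemma vnormD u v : vnorm (fun S => u S + v S) <= vnorm u + vnorm v.
Proof. by apply: vnorm_le_add => S; apply: cabsD. Qed.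

Lemma vnormB u v : vnorm (fun S => u S - v S) <= vnorm u + vnorm v.
Proof. by apply: vnorm_le_add => S; rewrite /cabs -(normcN (v S)); apply: cabsD. Qed.

Lemma vnormZ c v : vnorm (fun S => c * v S) = cabs c * vnorm v.
Proof.
rewrite /Defs.vnorm -[cabs c](ger0_norm (cabs_ge0 c)) -sqrtr_sqr -sqrtrM ?sqr_ge0 //.
by rewrite mulr_sumr; congr Num.sqrt; apply: eq_bigr => S _; rewrite cabsM exprMn.
Qed.

Lemma vnorm0 : vnorm (fun _ => 0) = 0.
Proof. by rewrite /Defs.vnorm big1 ?sqrtr0 // => S _; rewrite /cabs Normc.normc0 expr0n. Qed.

Lemma vnorm_sum (J : Type) (r : seq J) (P : pred J) (F : J -> vec) :
  vnorm (fun S => \sum_(j <- r | P j) F j S) <= \sum_(j <- r | P j) vnorm (F j).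
Proof.
elim: r => [|j r IH].
  by under eq_fun do rewrite big_nil; rewrite vnorm0 big_nil.
under eq_fun do rewrite big_cons; rewrite big_cons.
by case: (P j) => //; apply: le_trans (vnormD _ _) _; rewrite lerD2l.
Qed.

Lemma vnorm_mul_contraction g v : (forall S, cabs (g S) <= 1) ->
  vnorm (fun S => g S * v S) <= vnorm v.
Proof.
move=> g_le1; apply: vnorm_le => S.
by rewrite cabsM ler_piMl ?cabs_ge0.
Qed.

Lemma cabs_le_vnorm v S : cabs (v S) <= vnorm v.
Proof.
rewrite -(ger0_norm (cabs_ge0 (v S))) -sqrtr_sqr; apply: ler_wsqrtr.
by rewrite (bigD1 S) //= lerDl; apply: sumr_ge0 => T _; apply: sqr_ge0.
Qed.

End FockVectors.

Section Operators.
Context {R : realType} {d L : nat}.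
Local Notation C := R[i].
Local Notation vec := (vec R d L).
Local Notation op := (op R d L).
Local Notation vnorm := (@vnorm R d L).
Local Notation cabs := (@cabs R).
Implicit Types (A : op) (v : vec).

Lemma op_apply_sum (I : finType) (P : pred I) (F : I -> op) v :
  op_apply (op_sum P F) v = fun S => \sum_(i | P i) op_apply (F i) v S.
Proof.
apply: boolp.funext => S; rewrite /op_apply /op_sum.
under eq_bigr do rewrite mulr_suml.
exact: exchange_big.
Qed.

Lemma op_apply_scale a A v : op_apply (op_scale a A) v = fun S => a * op_apply A v S.
Proof.
apply: boolp.funext => S; rewrite /op_apply mulr_sumr.
by apply: eq_bigr => T _; rewrite mulrA.
Qed.

Lemma op_apply_bounded A : exists B, forall v, vnorm v <= 1 -> vnorm (op_apply A v) <= B.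
Proof.
exists (\sum_T vnorm (fun S => A S T)) => v v_le1.
rewrite /op_apply; under eq_fun do under eq_bigr do rewrite mulrC.
apply: le_trans (vnorm_sum _ _ _ (fun T S => v T * A S T)) _.
apply: ler_sum => T _; rewrite vnormZ ler_piMl ?vnorm_ge0 //.
exact: le_trans (cabs_le_vnorm _ _) v_le1.
Qed.

Lemma vnorm_apply_le_opnorm A v : vnorm v <= 1 -> vnorm (op_apply A v) <= opnorm A.
Proof.
move=> v_le1; apply: sup_upper_bound; last by exists v.
split; first by exists (vnorm (op_apply A v)), v.
by have [B leB] := op_apply_bounded A; exists B => r [w [w_le1 ->]]; apply: leB.
Qed.

Lemma opnorm_le A c : (forall v, vnorm v <= 1 -> vnorm (op_apply A v) <= c) ->
  opnorm A <= c.
Proof.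
move=> le_c; apply: ge_sup; last by move=> r [w [w_le1 ->]]; apply: le_c.
by exists (vnorm (op_apply A (fun _ => 0))), (fun _ => 0); rewrite vnorm0.
Qed.

Lemma opnorm_ge0 A : 0 <= opnorm A.
Proof.
apply: le_trans (vnorm_apply_le_opnorm A (fun _ => 0) _); first exact: vnorm_ge0.
by rewrite vnorm0.
Qed.

Lemma opnorm_sum (I : finType) (P : pred I) (F : I -> op) :
  opnorm (op_sum P F) <= \sum_(i | P i) opnorm (F i).
Proof.
apply: opnorm_le => v v_le1; rewrite op_apply_sum.
apply: le_trans (vnorm_sum _ _ _ _) _; apply: ler_sum => i _.
exact: vnorm_apply_le_opnorm.
Qed.

Lemma opnorm_scale_le a A : opnorm (op_scale a A) <= cabs a * opnorm A.
Proof.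
apply: opnorm_le => v v_le1; rewrite op_apply_scale.
by rewrite vnormZ ler_wpM2l ?cabs_ge0 ?vnorm_apply_le_opnorm.
Qed.

Definition diag (g : {set mode d L} -> C) : op := fun S T => (S == T)%:R * g S.

Lemma comm_diagE A g S T : comm A (diag g) S T = A S T * (g T - g S).
Proof.
rewrite /comm /op_add /op_scale /op_mul /diag.
rewrite (bigD1 T) // [X in _ + _ * X](bigD1 S) //= !eqxx !mul1r.
rewrite !big1 ?addr0 => [|U|U]; last 2 first.
- by rewrite eq_sym => /negbTE ->; rewrite !mul0r.
- by move=> /negbTE ->; rewrite mul0r mulr0.
ring.
Qed.

Lemma opnorm_comm_diag A g : (forall S, cabs (g S) <= 1) ->
  opnorm (comm A (diag g)) <= 2 * opnorm A.
Proof.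
move=> g_le1; apply: opnorm_le => v v_le1.
have -> : op_apply (comm A (diag g)) v
    = fun S => op_apply A (fun T => g T * v T) S - g S * op_apply A v S.
  apply: boolp.funext => S; rewrite /op_apply mulr_sumr -sumrB.
  by apply: eq_bigr => T _; rewrite comm_diagE; ring.
apply: le_trans (vnormB _ _) _; rewrite mulr_natl mulr2n.
apply: lerD.
  by apply/vnorm_apply_le_opnorm/(le_trans _ v_le1)/vnorm_mul_contraction.
by apply: le_trans (vnorm_mul_contraction _ _ g_le1) _; apply: vnorm_apply_le_opnorm.
Qed.

End Operators.

Section OccupationNumbers.
Context {R : realType} {d L : nat}.
Local Notation C := R[i].
Local Notation M := (mode d L).
Local Notation cabs := (@cabs R).

Lemma jw_sign_conj (m : M) S : (jw_sign R m S)^* = jw_sign R m S.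
Proof. by rewrite /jw_sign rmorphXn rmorphN1. Qed.

Lemma jw_sign_sqr (m : M) S : jw_sign R m S * jw_sign R m S = 1.
Proof. by rewrite /jw_sign -exprMn mulrNN mulr1 expr1n. Qed.

Lemma nop_diag (x : site d L) s : nop R x s = diag (fun S => ((x, s) \in S)%:R).
Proof.
apply: boolp.funext => S; apply: boolp.funext => T.
rewrite /nop /op_mul /cdag /op_adj /cop /diag.
have [mS|_] := boolP ((x, s) \in S); last first.
  by rewrite mulr0 big1 // => U _; rewrite /= mul0r rmorph0 mul0r.
rewrite (bigD1 (S :\ (x, s))) //= eqxx mul1r big1 ?addr0; last first.
  by move=> U /negbTE; rewrite eq_sym => ->; rewrite /= mul0r rmorph0 mul0r.
rewrite mulr1 jw_sign_conj.
have [<-|neqST] := eqVneq S T; first by rewrite eqxx mS /= mul1r jw_sign_sqr.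
have [mT|_] := boolP ((x, s) \in T) => /=; last by rewrite mul0r mulr0.
case: eqP => [eqST|_]; last by rewrite mul0r mulr0.
by case/eqP: neqST; rewrite -(finset.setD1K mS) eqST finset.setD1K.
Qed.

Definition q_eig (x : site d L) (S : {set M}) : C :=
  (((x, true) \in S)%:R + ((x, false) \in S)%:R - 1) ^+ 2.

Lemma qx_diag (x : site d L) : qx R x = diag (q_eig x).
Proof.
apply: boolp.funext => S; apply: boolp.funext => T.
rewrite /qx /nx !nop_diag /op_mul /op_add /op_scale /op_one /diag /q_eig.
rewrite (bigD1 T) //= big1 ?addr0 => [|U /negbTE neqUT]; last first.
  by rewrite neqUT mulr0n; ring.
by case: eqP => [->|_]; rewrite ?eqxx ?mulr1n ?mulr0n; ring.
Qed.

Lemma cabs_q_eig_le1 x S : cabs (q_eig x S) <= 1.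
Proof.
have [->|->] : q_eig x S = 0 \/ q_eig x S = 1.
  rewrite /q_eig; case: (_ \in S); case: (_ \in S);
    rewrite ?mulr1n ?mulr0n; [right|left|left|right]; ring.
- by rewrite /cabs Normc.normc0.
- by rewrite /cabs Normc.normc1.
Qed.

End OccupationNumbers.

Section Locality.
Context {R : realType} {d L : nat}.
Local Notation op := (op R d L).
Local Notation M := (mode d L).
Implicit Types (X : {set site d L}) (A B : op).

Definition localized X A : Prop :=
  forall S T, A S T != 0 -> forall m : M, m.1 \notin X -> (m \in S) = (m \in T).

Lemma localized_cop X x s : x \in X -> localized X (cop R (x, s)).
Proof.
move=> xX S T; rewrite /cop.
have [mT|_] := boolP ((x, s) \in T); last by rewrite /= mul0r eqxx.
have [-> _ m mX|_] := eqVneq S (T :\ (x, s)); last by rewrite /= mul0r eqxx.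
by rewrite in_setD1; case: eqP => // eq_m; move: mX; rewrite eq_m xX.
Qed.

Lemma localized_adj X A : localized X A -> localized X (op_adj A).
Proof.
by move=> locA S T; rewrite /op_adj conjc_eq0 => /locA loc m /loc ->.
Qed.

Lemma localized_one X : localized X (@op_one R d L).
Proof. by move=> S T; rewrite /op_one; have [-> //|_] := eqVneq S T; rewrite eqxx. Qed.

Lemma localized_add X A B : localized X A -> localized X B -> localized X (op_add A B).
Proof.
move=> locA locB S T; rewrite /op_add.
by have [->|/locA //] := eqVneq (A S T) 0; rewrite add0r => /locB.
Qed.

Lemma localized_scale X a A : localized X A -> localized X (op_scale a A).
Proof. by move=> locA S T; rewrite /op_scale mulf_eq0 negb_or => /andP[_ /locA]. Qed.

Lemma localized_mul X A B : localized X A -> localized X B -> localized X (op_mul A B).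
Proof.
move=> locA locB S T; rewrite /op_mul => nz m mX.
have [U /andP[/locA locU /locB locU']] : exists U, (A S U != 0) && (B U T != 0).
  apply/existsP; apply: contraNT nz; rewrite negb_exists => /forallP noU.
  apply/eqP/big1 => U _; move: (noU U); rewrite negb_and !negbK.
  by case/orP=> /eqP ->; rewrite ?mul0r ?mulr0.
by rewrite locU // locU'.
Qed.

Lemma in_alg_localized X A : Defs.in_alg X A -> localized X A.
Proof.
elim=> {A} [x s xX|x s xX||A B _ locA _ locB|a A _ locA|A B _ locA _ locB].
- exact: localized_cop.
- exact/localized_adj/localized_cop.
- exact: localized_one.
- exact: localized_add.
- exact: localized_scale.
- exact: localized_mul.
Qed.

Lemma comm_qx_eq0 X A x :
  localized X A -> x \notin X -> comm A (qx R x) = @op_zero R d L.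
Proof.
move=> locA xX; apply: boolp.funext => S; apply: boolp.funext => T.
rewrite qx_diag comm_diagE /op_zero.
have [->|/locA loc] := eqVneq (A S T) 0; first by rewrite mul0r.
by rewrite /q_eig !loc // subrr mulr0.
Qed.

End Locality.

Section Interactions.
Context {R : realType} {d L : nat}.
Local Notation op := (op R d L).
Local Notation vol := (#|site d L|%:R : R[i]).
Implicit Types (K : interaction R d L) (A : op) (X : {set site d L}) (x : site d L)
  (kappa : R).

Lemma qbar_diag : @qbar R d L = diag (fun S => vol^-1 * \sum_(x : site d L) q_eig x S).
Proof.
apply: boolp.funext => S; apply: boolp.funext => T.
rewrite /qbar /op_scale /op_sum /diag.
under eq_bigr do rewrite qx_diag /diag.
by rewrite -mulr_sumr mulrCA.
Qed.

Lemma opnorm_comm_qx A (x : site d L) : opnorm (comm A (qx R x)) <= 2 * opnorm A.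
Proof. by rewrite qx_diag; apply/opnorm_comm_diag/cabs_q_eig_le1. Qed.

Definition local_comm_sum K : op :=
  op_sum predT (fun X => op_sum (fun x => x \in X) (fun x => comm (K X) (qx R x))).

Lemma comm_K_total_qbar K : (forall X, localized X (K X)) ->
  comm (K_total K) (@qbar R d L) = op_scale vol^-1 (local_comm_sum K).
Proof.
move=> localK; apply: boolp.funext => S; apply: boolp.funext => T.
rewrite qbar_diag comm_diagE /local_comm_sum /K_total /op_scale /op_sum /=.
have sum_local X : \sum_(x | x \in X) comm (K X) (qx R x) S T
    = K X S T * \sum_x (q_eig x T - q_eig x S).
  rewrite mulr_sumr [RHS](bigID (fun x => x \in X)) /= [X in _ = _ + X]big1 ?addr0.
    by apply: eq_bigr => x _; rewrite qx_diag comm_diagE.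
  by move=> x xX; rewrite -comm_diagE -qx_diag (comm_qx_eq0 _ _ _ (localK X) xX).
under [in RHS]eq_bigr do rewrite sum_local.
by rewrite -mulr_suml sumrB; ring.
Qed.

Lemma int_norm_ge K kappa (x : site d L) :
  \sum_(X : {set site d L} | x \in X) expR (kappa * #|X|%:R) * opnorm (K X)
  <= int_norm kappa K.
Proof. by rewrite /int_norm (bigD1 x) //= le_max lexx. Qed.

Lemma int_norm_le K kappa (kappa' : R) :
  kappa <= kappa' -> int_norm kappa K <= int_norm kappa' K.
Proof.
move=> le_kappa; apply: (big_ind2 (fun a b => a <= b)) => // [a b a' b' *|x _].
  exact: le_max2.
apply: ler_sum => X _; rewrite ler_wpM2r ?opnorm_ge0 // ler_expR.
by rewrite ler_wpM2r.
Qed.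

Lemma sum_local_opnorm_le K :
  \sum_(x : site d L) \sum_(X : {set site d L} | x \in X) opnorm (K X)
  <= #|site d L|%:R * int_norm 0 K.
Proof.
apply: le_trans (_ : \sum_(x : site d L) int_norm 0 K <= _).
  apply: ler_sum => x _; apply: le_trans (int_norm_ge K 0 x).
  by under [leRHS]eq_bigr do rewrite mul0r expR0 mul1r.
by rewrite sumr_const mulr_natl.
Qed.

Lemma opnorm_local_comm_sum_le K :
  opnorm (local_comm_sum K) <= 2 * (#|site d L|%:R * int_norm 0 K).
Proof.
have opnorm_comm_sum_le X :
    opnorm (op_sum (fun x => x \in X) (fun x => comm (K X) (qx R x)))
    <= \sum_(x | x \in X) 2 * opnorm (K X).
  apply: le_trans (opnorm_sum _ _ _) _.
  by apply: ler_sum => x _; apply: opnorm_comm_qx.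
apply: le_trans (opnorm_sum _ _ _) _.
apply: le_trans (ler_sum _ (fun X _ => opnorm_comm_sum_le X)) _.
rewrite (exchange_big_dep predT) //=.
under eq_bigr do rewrite -mulr_sumr.
by rewrite -mulr_sumr ler_wpM2l ?sum_local_opnorm_le.
Qed.

End Interactions.

Theorem lemmaA5 (R : realType) (d L : nat) (hL : (0 < L)%N) (hLev : ~~ odd L)
  (K : interaction R d L) (hK : even_interaction K) (kappa : R) (hk : 0 <= kappa) :
  opnorm (comm (K_total K) (@qbar R d L)) <= 2 * int_norm 0 K /\
  2 * int_norm 0 K <= 2 * int_norm kappa K.
Proof.
split; last by rewrite ler_pM2l // int_norm_le.
have localK X : localized X (K X) by apply: in_alg_localized; case: (hK X).
have card_site_gt0 : (0 < #|site d L|)%N by rewrite card_ffun !card_ord expn_gt0 hL.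
rewrite comm_K_total_qbar //; apply: le_trans (opnorm_scale_le _ _) _.
rewrite cabs_natV; apply: le_trans (ler_wpM2l _ (opnorm_local_comm_sum_le K)) _.
  by rewrite invr_ge0 ler0n.
by rewrite mulrCA mulKf // pnatr_eq0 -lt0n.
Qed.
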